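(* Suppose the ST problem for $(D_{SC},F,B)$ has a positive answer. Then there is a solution to it, which necessarily consists of paths $\pi(v)$, one starting at each source $v$ of $D_{SC}$, such that for every $i\in\mathcal U$ and $j\in I_i$ we have $V(\pi(u_{i,j}))\subseteq V(C_i)$.
   Context: Snow Team problem (ST): given a digraph $D=(\mathcal V,\mathcal A)$ whose underlying graph is connected, and $F:\mathcal V\to\{0,1\}$, $B:\mathcal V\to\mathbb N$, with $\mathbf k_B=\sum_vB(v)$: do there exist $\mathbf k_B$ directed walks, exactly $B(v)$ of which start at each $v$, such that, letting $H$ be the subgraph consisting of the vertices and arcs of these walks, all vertices of $F^{-1}(1)$ lie in one connected component of the underlying undirected graph of $H$? Such walks form a solution. Construction: $\mathcal U=\{1,\dots,n\}$, $\mathcal S=\{S_1,\dots,S_m\}$ with $S_t\subseteq\mathcal U$, $\bigcup_tS_t=\mathcal U$, and $1\le k\le m$. Write $S_t=\{x_1<\dots<x_{\ell(t)}\}$ and $I_i=\{j: i\in S_j\}$. The digraph $D_{SC}$ has vertices $u_i$ ($i\in\mathcal U$); $u_{i,j},u'_{i,j},v_{i,j},v'_{i,j}$ ($i\in\mathcal U$, $j\in I_i$); and $z,z_1,\dots,z_k$. Its arcs are those of the vertical paths $P_{i,j}=(u_{i,j},u_i,u'_{i,j},v_{i,j},v'_{i,j})$ ($i\in\mathcal U,j\in I_i$), of the horizontal paths $P^h_t=(z,v_{x_1,t},v_{x_2,t},\dots,v_{x_{\ell(t)},t})$ ($t\in\{1,\dots,m\}$, with $x_1<\dots<x_{\ell(t)}$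 the elements of $S_t$), and the arcs $(z_l,z)$ for $l=1,\dots,k$. The $i$-th element component $C_i$ is the subgraph induced by $\bigcup_{j\in I_i}V(P_{i,j})$. Set $F(v)=1$ for all vertices $v$, and $B(v)=1$ if $v$ is a source of $D_{SC}$ (i.e. $v\in\{u_{i,j}\}\cup\{z_1,\dots,z_k\}$) and $B(v)=0$ otherwise. Since $D_{SC}$ is acyclic, every solution consists of one directed path $\pi(v)$ starting at each source $v$. *)

From mathcomp Require Import all_boot.
Set Implicit Arguments. Unset Strict Implicit. Unset Printing Implicit Defensive.

Section ST.
Variable V : finType.
Variable isV : pred V.
Variable A : rel V.

Definition walk (w : seq V) : bool :=
  if w is x :: p then all isV w && path A x p else false.

Definition inH (W : seq (seq V)) (x : V) : bool := has (fun w => x \in w) W.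
Definition arcH (W : seq (seq V)) (x y : V) : bool :=
  has (fun w => infix [:: x; y] w) W.
Definition uarcH (W : seq (seq V)) : rel V := fun x y => arcH W x y || arcH W y x.

(* W is a solution of ST for (D, F, B): exactly B v walks start at each v, and
   all vertices of F^{-1}(1) lie in one connected component of H *)
Definition ST_solution (F : V -> bool) (B : V -> nat) (W : seq (seq V)) : Prop :=
  [/\ all walk W,
      (forall v, isV v -> count (fun w => ohead w == Some v) W = B v) &
      (forall x y, isV x -> isV y -> F x -> F y ->
         [/\ inH W x, inH W y & connect (uarcH W) x y])].
End ST.

(* Universe U = 'I_n (elements 0..n-1 stand for 1..n), sets S : 'I_m -> {set 'I_n}.
   Vertices:  u_i                         = vU i
              u_{i,j}, u'_{i,j}, v_{i,j}, v'_{i,j} = vP c i j with c = 0,1,2,3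
              z = vZ,  z_l = vZl l (l : 'I_k). *)
Definition vtx (n m k : nat) :=
  ('I_n + ('I_4 * 'I_n * 'I_m) + (unit + 'I_k))%type.

Definition vU {n m k} (i : 'I_n) : vtx n m k := inl (inl i).
Definition vP {n m k} (c : 'I_4) (i : 'I_n) (j : 'I_m) : vtx n m k := inl (inr (c, i, j)).
Definition vZ {n m k} : vtx n m k := inr (inl tt).
Definition vZl {n m k} (l : 'I_k) : vtx n m k := inr (inr l).

Definition c0 : 'I_4 := @Ordinal 4 0 isT.

Section DSC.
Variables n m k : nat.
Variable S : 'I_m -> {set 'I_n}.

(* vertex set: vP c i j exists only when j \in I_i, i.e. i \in S j *)
Definition isV_SC (v : vtx n m k) : bool :=
  match v with
  | inl (inr (_, i, j)) => i \in S j
  | _ => true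
  end.

Definition min_in (A : {set 'I_n}) (x : 'I_n) : bool :=
  (x \in A) && [forall w in A, x <= w].
Definition succ_in (A : {set 'I_n}) (x y : 'I_n) : bool :=
  [&& x \in A, y \in A, x < y & [forall w in A, ~~ ((x < w) && (w < y))]].

Definition arc_SC (a b : vtx n m k) : bool :=
  match a, b with
  | inl (inr (c, i, j)), inl (inl i') => [&& val c == 0, i == i' & i \in S j]
  | inl (inl i'), inl (inr (c, i, j)) => [&& val c == 1, i == i' & i \in S j]
  | inl (inr (c, i, j)), inl (inr (c', i', j')) =>
      (i \in S j) && (
        ([|| (val c == 1) && (val c' == 2) | (val c == 2) && (val c' == 3)]
           && (i == i') && (j == j'))
        (* horizontal path arcs v_{x_a,t} -> v_{x_{a+1},t} *)
        || [&& val c == 2, val c' == 2, j == j' & succ_in (S j) i i'])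
  (* horizontal path first arc z -> v_{x_1,t} *)
  | inr (inl _), inl (inr (c, i, j)) => (val c == 2) && min_in (S j) i
  | inr (inr _), inr (inl _) => true
  | _, _ => false
  end.

Definition F_SC (v : vtx n m k) : bool := true.

Definition B_SC (v : vtx n m k) : nat :=
  match v with
  | inl (inr (c, _, _)) => if val c == 0 then 1 else 0
  | inr (inr _) => 1
  | _ => 0
  end.

(* vertex set of the i-th element component C_i *)
Definition inC (i : 'I_n) (v : vtx n m k) : bool :=
  match v with
  | inl (inl i') => i' == i
  | inl (inr (_, i', j)) => (i' == i) && (i \in S j)
  | _ => false
  end.
End DSC.

From mathcomp Require Import all_boot.
Set Implicit Arguments. Unset Strict Implicit. Unset Printing Implicit Defensive.

(* In a solution, let [row_of l] be the row into which the walk from [z_l]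
   turns at [z], and call [x] covered if it lies in some [S (row_of l)].
   Coverage of the underlying element is preserved along the arcs of [H]:
   the only delicate arcs are the horizontal ones of a row [t] used by no
   [z_l], and there are none.  Indeed each [u'_{x,t}] lies on at most one
   walk, so at most [#|{c in S t | c <= a}|] walks enter row [t] at positions
   [<= a]; they must end at all the sinks [v'_{x,t}] with [x <= a], so none
   of them moves right from [v_{a,t}].  Since [H] connects [z] with every
   [u_x], every element is covered.  Then the vertical paths [P_{i,j}]
   together with, for each [z_l], the walk [z_l z] followed by the whole
   horizontal path of [row_of l], form the required solution. *)

Lemma sorted_infix2 (T : eqType) (e : rel T) w a b :
  sorted e w -> infix [:: a; b] w -> e a b.
Proof.
move=> sw /infixP [s [s' E]]; move: sw; rewrite E => /cat_sorted2[_].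
by rewrite /= => /andP[].
Qed.

Lemma sorted_rcons2 (T : eqType) (e : rel T) s a b :
  sorted e (rcons (rcons s a) b) -> e a b.
Proof.
case: s => [|x s] /=; first by rewrite andbT.
by rewrite !rcons_path last_rcons => /andP[].
Qed.

Lemma count_eq1_uniq (T : eqType) (p : pred T) s x y :
  count p s = 1 -> x \in s -> y \in s -> p x -> p y -> x = y.
Proof.
elim: s => //= h s IH; case: (boolP (p h)) => ph /=.
- move=> [] /eqP; rewrite -leqn0 leqNgt -has_count => /hasPn none.
  rewrite !inE => /orP[/eqP->|/none/negbTE->]// /orP[/eqP->|/none/negbTE->]//.
- rewrite add0n => count1; rewrite !inE => /orP[/eqP->|hx]; first by rewrite (negbTE ph).
  move=> /orP[/eqP->|hy]; first by move=> _; rewrite (negbTE ph).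
  exact: IH.
Qed.

Lemma count_eq0_in (T : eqType) (a : pred T) s : {in s, forall x, ~~ a x} -> count a s = 0.
Proof. by move=> na; apply/eqP; rewrite -leqn0 leqNgt -has_count; apply/hasPn. Qed.

Lemma sub_in_count (T : eqType) (a1 a2 : pred T) s :
  {in s, subpred a1 a2} -> count a1 s <= count a2 s.
Proof.
elim: s => //= h s IH sub12; apply: leq_add.
  by case: (boolP (a1 h)) => // /sub12->; rewrite // mem_head.
by apply: IH => y ys; apply: sub12; rewrite inE ys orbT.
Qed.

Lemma count_lt_in (T : eqType) (a1 a2 : pred T) s x :
  {in s, subpred a1 a2} -> x \in s -> a2 x -> ~~ a1 x ->
  count a1 s < count a2 s.
Proof.
elim: s => //= h s IH sub12; rewrite inE => /orP[/eqP->|xs] a2x na1x.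
  rewrite a2x (negbTE na1x) add0n add1n ltnS.
  by apply: sub_in_count => y ys; apply: sub12; rewrite inE ys orbT.
have sub12' : {in s, subpred a1 a2} by move=> y ys; apply: sub12; rewrite inE ys orbT.
rewrite -addnS; apply: leq_add; last exact: IH.
by case: (boolP (a1 h)) => // /sub12->; rewrite // mem_head.
Qed.

Lemma count_exists_le_sum (T : eqType) (I : finType) (D : {pred I})
    (a : I -> pred T) s :
  count (fun x => [exists i in D, a i x]) s <= \sum_(i in D) count (a i) s.
Proof.
elim: s => [|h s IH] /=; first by rewrite big1.
rewrite big_split /=; apply: leq_add => //.
case: existsP => // [[i /andP[Di ai]]].
by rewrite (bigD1 i) //= ai.
Qed.

Lemma sum_count_disjoint (T : eqType) (I : finType) (D : {pred I})
    (a : I -> pred T) s :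
  {in s, forall x i i', i \in D -> i' \in D -> a i x -> a i' x -> i = i'} ->
  \sum_(i in D) count (a i) s = count (fun x => [exists i in D, a i x]) s.
Proof.
elim: s => [|h s IH] disj /=; first by rewrite big1.
rewrite big_split /= IH; last by move=> x xs; apply: disj; rewrite inE xs orbT.
congr (_ + _); have {}disj := disj h (mem_head _ _).
case: existsP => [[i /andP[Di ai]]|none].
  rewrite (bigD1 i) //= ai big1 // => i' /andP[Di' ni'].
  by apply/eqP; rewrite eqb0; apply: contra ni' => ai'; rewrite (disj i' i).
rewrite big1 // => i Di; apply/eqP; rewrite eqb0; apply/negP => ai.
by apply: none; exists i; rewrite Di.
Qed.

Lemma leq_sum_at (I : finType) (D : {pred I}) (a b : I -> nat) i0 : i0 \in D ->
  (forall i, i \in D -> b i <= a i) -> \sum_(i in D) a i <= \sum_(i in D) b i ->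
  a i0 <= b i0.
Proof.
move=> Di0 ba; rewrite (bigD1 i0) //= [X in _ <= X](bigD1 i0) //= => le_ab.
have le_rest : \sum_(i in D | i != i0) b i <= \sum_(i in D | i != i0) a i.
  by apply: leq_sum => i /andP[Di _]; apply: ba.
rewrite -(leq_add2r (\sum_(i in D | i != i0) a i)); apply: leq_trans le_ab _.
by rewrite leq_add2l.
Qed.

Lemma path_map_filter_iota (T : Type) (e : rel T) (P : pred nat) (g : nat -> T) :
  (forall x y, P x -> P y -> x < y -> (forall w, x < w < y -> ~~ P w) -> e (g x) (g y)) ->
  forall len i h,
  (forall y, P y -> i <= y -> (forall w, i <= w < y -> ~~ P w) -> e h (g y)) ->
  path e h (map g (filter P (iota i len))).
Proof.
move=> eP; elim=> [|len IH] i h eh //=.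
case: (boolP (P i)) => Pi /=.
- rewrite (eh i Pi (leqnn _)); last first.
    by move=> w /andP[a b]; move: (leq_trans b a); rewrite ltnn.
  apply: IH => y Py iy noP; apply: eP => // w /andP[a b]; by apply: noP; rewrite a b.
- apply: IH => y Py iy noP; apply: eh => //; first exact: ltnW.
  move=> w /andP[a b]; move: a; rewrite leq_eqVlt => /orP[/eqP<- //|a].
  by apply: noP; rewrite a b.
Qed.

Lemma connect_uarcH_infix (T : finType) (W : seq (seq T)) w : w \in W ->
  forall p x, infix (x :: p) w -> {in x :: p, forall y, connect (uarcH W) x y}.
Proof.
move=> Ww; elim=> [|b p IH] x inf y; first by rewrite inE => /eqP->; apply: connect0.
rewrite inE => /orP[/eqP->|yp]; first exact: connect0.
have xb : uarcH W x b.
  apply/orP; left; apply/hasP; exists w => //; apply: infix_trans inf.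
  by apply: prefixW; rewrite /= !eqxx prefix0s.
apply: connect_trans (connect1 xb) (IH _ _ _ yp).
by apply: infix_trans inf; apply: infix_cons.
Qed.

Lemma connect_uarcH_sym (T : finType) (W : seq (seq T)) : connect_sym (uarcH W).
Proof. by apply: sym_connect_sym => x y; rewrite /uarcH orbC. Qed.

Lemma connect_uarcH_mem (T : finType) (W : seq (seq T)) w x y :
  w \in W -> x \in w -> y \in w -> connect (uarcH W) x y.
Proof.
case: w => // h p Ww xw yw; have head_conn := connect_uarcH_infix Ww (infix_refl _).
by apply: connect_trans (head_conn _ yw); rewrite connect_uarcH_sym head_conn.
Qed.

Definition c1 : 'I_4 := @Ordinal 4 1 isT.
Definition c2 : 'I_4 := @Ordinal 4 2 isT.
Definition c3 : 'I_4 := @Ordinal 4 3 isT.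

Section Level.
Variables (n m k : nat) (S : 'I_m -> {set 'I_n}).
Local Notation V := (vtx n m k).
Local Notation A := (arc_SC S).

(* A potential for D_SC: no arc decreases it, [u'_{i,j}] are the only
   vertices of level 2, and horizontal arcs strictly increase it. *)
Definition level (v : V) : nat :=
  match v with
  | inl (inl _) => 1
  | inl (inr (c, i, _)) => if val c == 0 then 0 else if val c == 1 then 2 else 3 + i
  | inr (inl _) => 1
  | inr (inr _) => 0
  end.

Lemma level_arc a b : A a b -> level a <= level b.
Proof.
case: a => [[i|[[c i] j]]|[[]|l]]; case: b => [[i'|[[c' i'] j']]|[[]|l']] //=.
- by case/and3P => /eqP->.
- by case/and3P => /eqP->.
- case/andP=> _ /orP[|] //.
    by case/andP=> /andP[/orP[/andP[/eqP-> /eqP->]|/andP[/eqP-> /eqP->]] /eqP->].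
  by case/and4P=> /eqP-> /eqP-> _ /and4P[_ _ lt_ii' _] /=; rewrite leq_add2l ltnW.
- by case/andP => /eqP->.
Qed.

Lemma level_path x p : path A x p -> {in p, forall y, level x <= level y}.
Proof.
elim: p x => //= h p IH x /andP[Axh hp] y; rewrite inE => /orP[/eqP->|yp].
  exact: level_arc.
exact: leq_trans (level_arc Axh) (IH _ hp _ yp).
Qed.

Lemma level_last x p : path A x p -> {in x :: p, forall y, level y <= level (last x p)}.
Proof.
elim: p x => [|h p IH] x /=; first by move=> _ y; rewrite inE => /eqP->.
case/andP=> Axh hp y; rewrite inE => /orP[/eqP->|yp].
  exact: leq_trans (level_arc Axh) (IH _ hp _ (mem_head _ _)).
exact: IH.
Qed.

Lemma level_eq2 y : level y = 2 -> exists i j, y = vP c1 i j.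
Proof.
case: y => [[?|[[c i] j]]|[[]|?]] //=; case: c => [[|[|c]] lt_c4] //= _.
by exists i, j; congr vP; apply: ord_inj.
Qed.

Lemma level_after2 p1 y p2 z :
  sorted A (p1 ++ y :: p2) -> level y = 2 -> z \in p2 -> 3 <= level z.
Proof.
rewrite sorted_cat_cons => /andP[_]; case: p2 => //= h r /andP[Ayh hr] ly.
have lh : 3 <= level h.
  have [i [j Ey]] := level_eq2 ly; subst y; move: Ayh; clear hr.
  case: h => [[?|[[c' i'] j']]|[[]|?]] //=.
  by rewrite !orbF => /andP[_ /andP[/andP[/eqP-> _] _]].
rewrite inE => /orP[/eqP->|zr] //; exact: leq_trans lh (level_path hr zr).
Qed.

End Level.

Section Solution.
Variables (n m k : nat) (S : 'I_m -> {set 'I_n}).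
Local Notation V := (vtx n m k).
Local Notation isV := (@isV_SC n m k S).
Local Notation A := (arc_SC S).
Local Notation level := (@level n m k).
Variable W : seq (seq V).
Hypothesis solW : ST_solution isV A (@F_SC n m k) (@B_SC n m k) W.

Lemma sol_walk w : w \in W -> walk isV A w.
Proof. by case: solW => /allP walkW _ _; apply: walkW. Qed.

Lemma sol_cons w : w \in W -> exists x p, w = x :: p /\ path A x p.
Proof. by move/sol_walk; case: w => // x p /andP[_ xp]; exists x, p. Qed.

Lemma sol_sorted w : w \in W -> sorted A w.
Proof. by case/sol_cons => x [p [-> xp]]. Qed.

Lemma sol_isV w y : w \in W -> y \in w -> isV y.
Proof. by move/sol_walk; case: w => // x p /andP[/allP isVw _] /isVw. Qed.

Lemma sol_count_head v : isV v -> count (fun w => ohead w == Some v) W = B_SC v.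
Proof. by case: solW => _ countW _; apply: countW. Qed.

Lemma sol_cover v : isV v -> exists2 w, w \in W & v \in w.
Proof.
case: solW => _ _ connW isVv; have [] := connW _ _ isVv isVv erefl erefl.
by move=> /hasP [w] ? ? _ _; exists w.
Qed.

Lemma sol_connect x y : isV x -> isV y -> connect (uarcH W) x y.
Proof. by case: solW => _ _ connW isVx isVy; case: (connW _ _ isVx isVy erefl erefl). Qed.

Lemma sol_head_source x p : x :: p \in W -> 0 < B_SC x.
Proof.
move=> Ww; have isVx : isV x by apply: (sol_isV Ww); rewrite mem_head.
by rewrite -(sol_count_head isVx) -has_count; apply/hasP; exists (x :: p).
Qed.

Lemma sol_pred w y : w \in W -> y \in w -> B_SC y = 0 ->
  exists2 z, infix [:: z; y] w & A z y.
Proof.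
move=> Ww yw By; have sw := sol_sorted Ww.
case/splitPr: yw Ww sw => p1 p2 Ww sw.
case/lastP: p1 Ww sw => [|q z] Ww sw.
  by have := sol_head_source Ww; rewrite By.
exists z; first by rewrite cat_rcons; apply/infixP; exists q, p2.
by move: sw; rewrite sorted_cat_cons => /andP[/sorted_rcons2].
Qed.

Lemma sol_head w y : w \in W -> y \in w -> (forall z, ~~ A z y) -> ohead w = Some y.
Proof.
move=> Ww yw no_in; have sw := sol_sorted Ww.
case/splitPr: yw Ww sw => p1 p2 Ww sw.
case/lastP: p1 Ww sw => [|q z] //= Ww.
rewrite sorted_cat_cons => /andP[/sorted_rcons2 Azy _].
by have := no_in z; rewrite Azy.
Qed.

Lemma sol_last w y x0 : w \in W -> y \in w -> (forall z, ~~ A y z) -> last x0 w = y.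
Proof.
move=> Ww yw no_out; have sw := sol_sorted Ww.
case/splitPr: yw Ww sw => p1 p2 Ww sw.
case: p2 Ww sw => [|z q] Ww; first by rewrite last_cat.
rewrite sorted_cat_cons /= => /andP[_ /andP[Ayz _]].
by have := no_out z; rewrite Ayz.
Qed.

Lemma sol_level2_uniq w y1 y2 : w \in W -> y1 \in w -> y2 \in w ->
  level y1 = 2 -> level y2 = 2 -> y1 = y2.
Proof.
move=> Ww y1w; have sw := sol_sorted Ww.
case/splitPr: y1w Ww sw => p1 p2 Ww sw y2w l1 l2.
move: y2w; rewrite mem_cat inE => /or3P[y2p1|/eqP//|y2p2].
- case/splitPr: y2p1 Ww sw => q1 q2 Ww sw.
  move: sw; rewrite -catA cat_cons => sw.
  have y1q : y1 \in q2 ++ y1 :: p2 by rewrite mem_cat mem_head orbT.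
  by have := level_after2 sw l2 y1q; rewrite l1.
- by have := level_after2 sw l1 y2p2; rewrite l2.
Qed.

Lemma sol_up_mem_u w x j : w \in W -> vP c1 x j \in w -> vU x \in w.
Proof.
move=> Ww yw; have [z zy] := sol_pred Ww yw erefl; have zw := mem_infix zy (mem_head _ _).
case: z zy zw => [[i|[[c i] j']]|[[]|l]] //= _ zw.
  by case/andP=> /eqP ->.
by rewrite /= !andbF.
Qed.

Lemma sol_u_head w x : w \in W -> vU x \in w ->
  exists2 j, x \in S j & ohead w = Some (vP c0 x j).
Proof.
move=> Ww uw; have [z zu] := sol_pred Ww uw erefl; have zw := mem_infix zu (mem_head _ _).
case: z zu zw => [[i|[[c i] j]]|[[]|l]] //= _ zw /and3P[c_0 /eqP ix xj]; subst i.
have cE : c = c0 by apply: ord_inj; apply/eqP.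
subst c; exists j => //; apply: sol_head Ww zw _ => y.
by case: y => [[?|[[? ?] ?]]|[[]|?]] //=; rewrite ?andbF.
Qed.

(* Walks through [u_x] start at some [u_{x,j}] and meet at most one
   [u'_{x,j}], while each of the [|I_x|] vertices [u'_{x,j}] is met. *)
Lemma sol_count_up x j : x \in S j -> count (fun w => vP c1 x j \in w) W <= 1.
Proof.
move=> xj; pose D := [pred j : 'I_m | x \in S j].
pose up j' (w : seq V) := vP c1 x j' \in w.
pose head_u j' (w : seq V) := ohead w == Some (vP c0 x j').
have up_ge1 j' : j' \in D -> 1 <= count (up j') W.
  move=> xj'; have [w Ww upw] := @sol_cover (vP c1 x j') xj'.
  by rewrite -has_count; apply/hasP; exists w.
apply: (@leq_sum_at _ D (fun j' => count (up j') W) (fun=> 1) j xj up_ge1).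
rewrite sum_count_disjoint; last first.
  by move=> w Ww j1 j2 _ _ up1 up2; have [] := sol_level2_uniq Ww up1 up2 erefl erefl.
apply: (@leq_trans (count (fun w => vU x \in w) W)).
  apply: sub_in_count.
  by move=> w Ww /existsP[j' /andP[_ /(sol_up_mem_u Ww)]].
apply: (@leq_trans (count (fun w => [exists j' in D, head_u j' w]) W)).
  apply: sub_in_count.
  move=> w Ww /(sol_u_head Ww)[j' xj' hw].
  by apply/existsP; exists j'; rewrite inE xj' /head_u hw /=.
apply: leq_trans (count_exists_le_sum _ _ _) _.
by apply/eq_leq/eq_bigr => j' xj'; apply: sol_count_head.
Qed.

Variable t0 : 'I_m.

Definition zrow (l : 'I_k) (t : 'I_m) :=
  has (fun w => [exists x, prefix [:: vZl l; vZ; vP c2 x t] w]) W.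

(* [t0] is a junk default, used when the walk of [z_l] stops at [z]. *)
Definition row_of (l : 'I_k) : 'I_m := odflt t0 [pick t | zrow l t].

Lemma sol_arc_from_z w b : w \in W -> infix [:: vZ; b] w ->
  exists l x, b = vP c2 x (row_of l) /\ x \in S (row_of l).
Proof.
move=> Ww /infixP [s [s' wE]]; subst w; have sw := sol_sorted Ww.
case/lastP: s sw Ww => [|q z] sw Ww; first by have := sol_head_source Ww.
move: sw; rewrite sorted_cat_cons => /andP[sqz /= /andP[Ab _]].
have := sorted_rcons2 sqz; case: z sqz Ww => [[i|[[c i] j]]|[[]|l]] //= sqz Ww _.
case/lastP: q sqz Ww => [|q z'] sqz Ww; last first.
  move: sqz; rewrite -cats1 => /cat_sorted2[/sorted_rcons2]; clear Ww.
  by case: z' => [[?|[[? ?] ?]]|[[]|?]].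
case: b Ab Ww => [[i|[[c i] t]]|[[]|l']] //= /andP[/eqP c_2 /andP[it _]] Ww.
have cE : c = c2 by apply: ord_inj.
subst c; exists l, i; suff -> : row_of l = t by [].
have zlt : zrow l t.
  apply/hasP; exists (vZl l :: vZ :: vP c2 i t :: s') => //.
  by apply/existsP; exists i; apply: (prefix_prefix [:: _; _; _]).
rewrite /row_of; case: pickP => [t' /hasP [w' Ww' /existsP [x' pre]]|]; last first.
  by move/(_ t); rewrite zlt.
case/prefixP: pre Ww' => r -> Ww' /=.
have one_zl := @sol_count_head (vZl l) isT.
by have [] := count_eq1_uniq one_zl Ww Ww' (eqxx _) (eqxx _).
Qed.

Definition active (t : 'I_m) := [exists l, row_of l == t].

Lemma sol_row_entry t x w : ~~ active t -> w \in W -> vP c2 x t \in w ->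
  exists2 c : 'I_n, c <= x & (c \in S t) && (vP c1 c t \in w).
Proof.
move=> inactive Ww; have [N] := ubnP x; elim: N x => // N IH x lt_xN vw.
have [z zv Azv] := sol_pred Ww vw erefl; have zw := mem_infix zv (mem_head _ _).
case: z zv zw Azv => [[i|[[c i] j]]|[[]|l]] //= zv zw.
- case/andP=> it /orP[/andP[/andP[/orP[/andP[/eqP c_1 _]|/andP[_ //]] /eqP ix] /eqP jt]|].
    have cE : c = c1 by apply: ord_inj.
    by subst c i j; exists x; rewrite ?leqnn ?it.
  case/and3P=> /eqP c_2 /eqP jt succ; subst j; have cE : c = c2 by apply: ord_inj.
  subst c; move: (succ) => /and4P[_ _ lt_ix _].
  have [c le_ci ctw] := IH i (leq_trans lt_ix lt_xN) zw.
  by exists c => //; apply: leq_trans le_ci (ltnW lt_ix).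
- move=> _; have [l [y [[_ tE] _]]] := sol_arc_from_z Ww zv.
  by case/negP: inactive; apply/existsP; exists l; rewrite tE.
Qed.

Definition row_prefix t (a : nat) := [pred c : 'I_n | (c \in S t) && (c <= a)].
Definition enters_row t a (w : seq V) := [exists c in row_prefix t a, vP c1 c t \in w].
Definition ends_in_row t a (w : seq V) :=
  [exists x in row_prefix t a, last vZ w == vP c3 x t].

Lemma count_enters_row t a : count (enters_row t a) W <= #|row_prefix t a|.
Proof.
apply: leq_trans (count_exists_le_sum _ _ _) _.
by rewrite -sum1_card; apply: leq_sum => c /andP[ct _]; apply: sol_count_up.
Qed.

Lemma count_ends_in_row t a : #|row_prefix t a| <= count (ends_in_row t a) W.
Proof.
rewrite /ends_in_row -sum_count_disjoint; last by move=> w _ x x' _ _ /eqP-> /eqP[->].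
rewrite -sum1_card; apply: leq_sum => x /andP[xt _].
have [w Ww vw] := @sol_cover (vP c3 x t) xt.
rewrite -has_count; apply/hasP; exists w => //; rewrite (sol_last _ Ww vw) //.
by case=> [[?|[[? ?] ?]]|[[]|?]] //=; rewrite ?andbF.
Qed.

Lemma sol_ends_enters_row t a : ~~ active t ->
  {in W, subpred (ends_in_row t a) (enters_row t a)}.
Proof.
move=> inactive w Ww /existsP[x /andP[/andP[xt le_xa] /eqP wE]].
have [y [p [wyp _]]] := sol_cons Ww.
have vw : vP c3 x t \in w by rewrite -wE wyp /=; apply: mem_last.
have [z zv] := sol_pred Ww vw erefl; have zw := mem_infix zv (mem_head _ _).
case: z zv zw => [[?|[[c i] j]]|[[]|?]] //= _ zw.
rewrite andbF orbF => /andP[_ /andP[/andP[c_2 /eqP ix] /eqP jt]].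
move: c_2 => /orP[/andP[_ //]|/andP[/eqP c_2 _]].
have cE : c = c2 by apply: ord_inj.
subst c i j; have [c le_cx /andP[ct cw]] := sol_row_entry inactive Ww zw.
by apply/existsP; exists c; rewrite inE ct (leq_trans le_cx le_xa).
Qed.

Lemma sol_no_horizontal t w a b : ~~ active t -> w \in W ->
  infix [:: vP c2 a t; vP c2 b t] w -> ~~ succ_in (S t) a b.
Proof.
move=> inactive Ww ab; apply/negP => /and4P[_ _ lt_ab _].
have := leq_trans (count_enters_row t a) (count_ends_in_row t a).
rewrite leqNgt => /negP; apply; apply: (count_lt_in (@sol_ends_enters_row t a inactive) Ww).
  have [c le_ca /andP[ct cw]] := sol_row_entry inactive Ww (mem_infix ab (mem_head _ _)).
  by apply/existsP; exists c; rewrite inE ct le_ca.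
apply/existsP => -[x /andP[/andP[_ le_xa] /eqP wE]].
have [y [p [wyp yp]]] := sol_cons Ww; subst w.
have bw : vP c2 b t \in y :: p by apply: (mem_infix ab); rewrite !inE eqxx orbT.
have := level_last yp bw; rewrite /= in wE; rewrite wE /= leq_add2l leqNgt.
by rewrite (leq_ltn_trans le_xa lt_ab).
Qed.

Definition covered (x : 'I_n) := [exists l, x \in S (row_of l)].
Definition vtx_covered (v : V) : bool :=
  match v with
  | inl (inl x) | inl (inr (_, x, _)) => covered x
  | inr _ => true
  end.

Lemma sol_arc_covered w a b : w \in W -> infix [:: a; b] w ->
  vtx_covered a = vtx_covered b.
Proof.
move=> Ww ab; have Aab := sorted_infix2 (sol_sorted Ww) ab.
move: Aab ab; case: a => [[i|[[c i] j]]|[[]|l]]; case: b => [[i'|[[c' i'] j']]|[[]|l']] //=.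
- by case/and3P=> _ /eqP->.
- by case/and3P=> _ /eqP->.
- case/andP=> _ /orP[/andP[/andP[_ /eqP->] _] //|].
  case/and4P=> /eqP c_2 /eqP c'_2 /eqP jj' succ ab; subst j'.
  move: (succ) => /and4P[it i't _ _].
  case: (boolP (active j)) => [/existsP[l /eqP lj]|].
    by apply/idP/idP => _; apply/existsP; exists l; rewrite lj.
  have cE : c = c2 by apply: ord_inj.
  have c'E : c' = c2 by apply: ord_inj.
  by subst c c' => inactive; have := sol_no_horizontal inactive Ww ab; rewrite succ.
- move=> _ zi; have [l [x [[_ -> _] xt]]] := sol_arc_from_z Ww zi.
  by apply/esym/existsP; exists l.
Qed.

Lemma sol_connect_covered x y : connect (uarcH W) x y -> vtx_covered x = vtx_covered y.
Proof.
case/connectP => p; elim: p x => [|z p IH] x /=; first by move=> _ ->.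
case/andP=> /orP[] /hasP[w Ww wz] /IH; rewrite ?(sol_arc_covered Ww wz) //.
Qed.

Lemma sol_rows_cover x : covered x.
Proof. by have := sol_connect_covered (@sol_connect vZ (vU x) isT isT). Qed.

End Solution.

Section Canonical.
Variables (n m k : nat) (S : 'I_m -> {set 'I_n}).
Local Notation V := (vtx n m k).
Local Notation isV := (@isV_SC n m k S).
Local Notation A := (arc_SC S).
Variable row : 'I_k -> 'I_m.
Hypothesis row_cover : forall x, exists l, x \in S (row l).
Hypothesis k_gt0 : 0 < k.

Definition vertical (i : 'I_n) (j : 'I_m) : seq V :=
  [:: vP c0 i j; vU i; vP c1 i j; vP c2 i j; vP c3 i j].

(* Row positions are indexed by [nat] so that the row can be built from
   [iota]; indices [>= n] are never selected. *)
Definition in_row t (i : nat) : bool := oapp (fun x : 'I_n => x \in S t) false (insub i).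
Definition row_vtx t (i : nat) : V := oapp (fun x : 'I_n => vP c2 x t) vZ (insub i).
Definition horizontal t : seq V := map (row_vtx t) (filter (in_row t) (iota 0 n)).

Definition zwalk (l : 'I_k) : seq V := vZl l :: vZ :: horizontal (row l).

Definition canon : seq (seq V) :=
  [seq vertical p.1 p.2 | p <- enum [pred p : 'I_n * 'I_m | p.1 \in S p.2]]
  ++ map zwalk (enum 'I_k).

Lemma in_row_val t (x : 'I_n) : in_row t x = (x \in S t).
Proof. by rewrite /in_row valK. Qed.

Lemma in_rowP t i : in_row t i ->
  exists x : 'I_n, [/\ val x = i, x \in S t & row_vtx t i = vP c2 x t].
Proof. by rewrite /in_row /row_vtx; case: insubP => [x _ <-|] //= xt; exists x. Qed.

Lemma path_horizontal t : path A vZ (horizontal t).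
Proof.
apply: path_map_filter_iota.
- move=> i i' /in_rowP[x [<- xt ->]] /in_rowP[x' [<- x't ->]] lt_xx' noP /=.
  rewrite xt /= /succ_in xt x't lt_xx' !eqxx /=.
  apply/forall_inP => y yt; apply/negP => xyx'.
  by have := noP y xyx'; rewrite in_row_val yt.
- move=> i /in_rowP[x [<- xt ->]] _ noP /=.
  rewrite /min_in xt /=; apply/forall_inP => y yt.
  by rewrite leqNgt; apply/negP => yx; have := noP y yx; rewrite in_row_val yt.
Qed.

Lemma mem_horizontal t v :
  v \in horizontal t -> exists2 x : 'I_n, x \in S t & v = vP c2 x t.
Proof.
case/mapP => i; rewrite mem_filter => /andP[/in_rowP[x [_ xt ->]] _] ->.
by exists x.
Qed.

Lemma horizontal_mem t (x : 'I_n) : x \in S t -> vP c2 x t \in horizontal t.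
Proof.
move=> xt; apply/mapP; exists (val x); last by rewrite /row_vtx valK.
by rewrite mem_filter in_row_val xt mem_iota /= ltn_ord.
Qed.

Lemma vertical_canon (i : 'I_n) j : i \in S j -> vertical i j \in canon.
Proof.
move=> ij; rewrite mem_cat; apply/orP; left.
by apply/mapP; exists (i, j); rewrite ?mem_enum.
Qed.

Lemma zwalk_canon l : zwalk l \in canon.
Proof. by rewrite mem_cat; apply/orP; right; apply: map_f; rewrite mem_enum. Qed.

Lemma canon_walk : all (walk isV A) canon.
Proof.
apply/allP => w; rewrite mem_cat => /orP[] /mapP [p].
  by rewrite mem_enum inE => ij ->; rewrite /walk /= !eqxx ij.
move=> _ ->; rewrite /walk /zwalk /= path_horizontal andbT.
by apply/allP => v /mem_horizontal [x xt ->].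
Qed.

Lemma canon_count_head v : isV v -> count (fun w => ohead w == Some v) canon = B_SC v.
Proof.
move=> isVv; rewrite count_cat !count_map.
case: v isVv => [[i|[[c i] j]]|[[]|l]] isVv.
- by rewrite !count_eq0_in.
- rewrite [X in _ + X]count_eq0_in // addn0 /=.
  case: (boolP (c == c0)) => [/eqP->|c_n0].
    rewrite (eq_count (a2 := pred1 (i, j))); last first.
      by case=> a b; rewrite /= /vP; apply/eqP/eqP => [[-> ->]|[-> ->]].
    by rewrite count_uniq_mem ?enum_uniq // mem_enum inE /= (isVv : i \in S j).
  rewrite count_eq0_in; last first.
    by case=> a b _ /=; apply/eqP => -[cE]; rewrite cE eqxx in c_n0.
  by case: c c_n0 {isVv} => [[|c] lt_c] //= /eqP; case; apply: ord_inj.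
- by rewrite !count_eq0_in.
- rewrite count_eq0_in // add0n /= (eq_count (a2 := pred1 l)); last first.
    by move=> l' /=; apply/eqP/eqP => [[->]|->].
  by rewrite count_uniq_mem -enumT ?enum_uniq // mem_enum.
Qed.

Lemma canon_connect_u_z i : connect (uarcH canon) (vU i) vZ.
Proof.
have [l il] := row_cover i.
have vert := connect_uarcH_mem (vertical_canon il).
have zw := connect_uarcH_mem (zwalk_canon l).
apply: (@connect_trans _ _ (vP c2 i (row l))).
  by apply: vert; rewrite !inE eqxx ?orbT.
by apply: zw; rewrite !inE ?eqxx ?horizontal_mem ?orbT.
Qed.

Lemma canon_connect_z v : isV v -> inH canon v /\ connect (uarcH canon) v vZ.
Proof.
case: v => [[i|[[c i] j]]|[[]|l]] isVv.
- have [l il] := row_cover i; split; last exact: canon_connect_u_z.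
  by apply/hasP; exists (vertical i (row l)); rewrite ?vertical_canon // !inE eqxx orbT.
- have ij : i \in S j := isVv.
  have vw : vP c i j \in vertical i j.
    case: c {isVv} => [[|[|[|[|c]]]] lt_c] //;
      by rewrite (bool_irrelevance lt_c isT) !inE eqxx ?orbT.
  split; first by apply/hasP; exists (vertical i j); rewrite ?vertical_canon.
  apply: connect_trans (canon_connect_u_z i).
  by apply: (connect_uarcH_mem (vertical_canon ij)); rewrite // !inE eqxx orbT.
- split; last exact: connect0.
  by apply/hasP; exists (zwalk (Ordinal k_gt0)); rewrite ?zwalk_canon // !inE eqxx orbT.
- split; first by apply/hasP; exists (zwalk l); rewrite ?zwalk_canon ?mem_head.
  by apply: (connect_uarcH_mem (zwalk_canon l)); rewrite !inE eqxx ?orbT.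
Qed.

Lemma canon_solution : ST_solution isV A (@F_SC n m k) (@B_SC n m k) canon.
Proof.
split; [exact: canon_walk | exact: canon_count_head |].
move=> x y isVx isVy _ _; have [xH xz] := canon_connect_z isVx.
have [yH yz] := canon_connect_z isVy.
by split => //; apply: connect_trans xz _; rewrite connect_uarcH_sym.
Qed.

Lemma canon_vertical w : w \in canon -> forall (i : 'I_n) (j : 'I_m),
  ohead w = Some (vP c0 i j) -> all (inC S i) w.
Proof.
rewrite mem_cat => /orP[] /mapP [p]; last by move=> _ -> i j.
case: p => a b; rewrite mem_enum inE /= => ab -> i j [ai _]; subst a.
by rewrite /= eqxx ab.
Qed.

End Canonical.

Theorem lemma6 (n m k : nat) (S : 'I_m -> {set 'I_n})
    (Hcover : \bigcup_(t < m) S t = [set: 'I_n])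
    (Hk1 : 1 <= k) (Hkm : k <= m) :
  (exists W, ST_solution (@isV_SC n m k S) (arc_SC S) (@F_SC n m k) (@B_SC n m k) W) ->
  exists W, ST_solution (@isV_SC n m k S) (arc_SC S) (@F_SC n m k) (@B_SC n m k) W /\
    (forall w, w \in W -> forall (i : 'I_n) (j : 'I_m),
       ohead w = Some (vP c0 i j) -> all (inC S i) w).
Proof.
case=> W solW; pose t0 : 'I_m := Ordinal (leq_trans Hk1 Hkm).
have rows_cover x : exists l, x \in S (row_of W t0 l).
  by have /existsP := sol_rows_cover solW t0 x.
exists (canon S (row_of W t0)); split; last exact: canon_vertical.
exact: canon_solution rows_cover Hk1.
Qed.
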